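(* Let $G$ be a directed graph with vertices $s,t$ and let $k\ge1$. For every $C\in U^k$ there exists $\hat C\in U^k_{\mathrm{lr}}$ such that $\mu_e(C)=\mu_e(\hat C)$ for all $e\in E(G)$.
   Context: An $s$-$t$ cut of a directed graph $G$ is a set $X\subseteq E(G)$ such that removing $X$ leaves no directed $s$-$t$ path; $\Gamma_G(s,t)$ is the set of $s$-$t$ cuts of minimum cardinality. For $s$-$t$ cuts $X,Y$, write $X\le Y$ if every directed $s$-$t$ path in $G$ meets an edge of $X$ at or before (along the path) an edge of $Y$. $U^k$ denotes the set of $k$-tuples $[X_1,\dots,X_k]$ with each $X_i\in\Gamma_G(s,t)$, and $U^k_{\mathrm{lr}}\subseteq U^k$ the set of those in left-right order, i.e. with $X_i\le X_j$ for all $i<j$. For $C=[X_1,\dots,X_k]$ and $e\in E(G)$, the multiplicity $\mu_e(C)$ is the number of indices $i$ with $e\in X_i$. *)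

From mathcomp Require Import all_boot.
Set Implicit Arguments. Unset Strict Implicit. Unset Printing Implicit Defensive.

Section Cuts.
Variables (V E : finType) (src dst : E -> V).

Definition walk_vertices (s : V) (p : seq E) : seq V := s :: map dst p.

Fixpoint chain (u : V) (p : seq E) : bool :=
  if p is e :: p' then (src e == u) && chain (dst e) p' else true.

Definition is_st_path (s t : V) (p : seq E) : bool :=
  [&& chain s p, last s (map dst p) == t & uniq (walk_vertices s p)].

Definition is_st_cut (s t : V) (X : {set E}) : Prop :=
  forall p, is_st_path s t p -> has (fun e => e \in X) p.

Definition is_min_st_cut (s t : V) (X : {set E}) : Prop :=
  is_st_cut s t X /\ forall Y : {set E}, is_st_cut s t Y -> #|X| <= #|Y|.

Definition cut_le (s t : V) (X Y : {set E}) : Prop :=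
  forall p, is_st_path s t p ->
    has (fun e => e \in X) p /\
    find (fun e => e \in X) p <= find (fun e => e \in Y) p.

Definition in_Uk (s t : V) (k : nat) (C : 'I_k -> {set E}) : Prop :=
  forall i, is_min_st_cut s t (C i).

Definition in_Uk_lr (s t : V) (k : nat) (C : 'I_k -> {set E}) : Prop :=
  in_Uk s t C /\ forall i j : 'I_k, i < j -> cut_le s t (C i) (C j).

Definition mult (k : nat) (C : 'I_k -> {set E}) (e : E) : nat :=
  #|[set i : 'I_k | e \in C i]|.

End Cuts.

From mathcomp Require Import all_boot.
From mathcomp Require Import zify.
Set Implicit Arguments. Unset Strict Implicit. Unset Printing Implicit Defensive.

(* Let A_i be the set of vertices reachable from s without using an edge of
   the minimum cut C_i; its out-edges form an s-t cut contained in C_i.  Let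
   c(v) count the i with v in A_i.  The level sets L_j = {v | c(v) >= k - j}
   are nested, contain s and miss t, so their out-edges form k cuts in
   left-right order.  An edge uv leaves at most c(u) - c(v) of the L_j, and
   c(u) - c(v) <= #{i | u in A_i, v notin A_i} <= mu_uv(C).  Each new cut is
   at least as large as a minimum cut, so summing over all edges forces
   equality of the multiplicities, and the new cuts are minimum too. *)

Section OutEdges.
Variables (V E : finType) (src dst : E -> V).

Definition out_edges (B : {set V}) : {set E} :=
  [set e | (src e \in B) && (dst e \notin B)].

Lemma chain_has_out_edge (B : {set V}) u p :
  u \in B -> chain src dst u p -> last u (map dst p) \notin B ->
  has (mem (out_edges B)) p.
Proof.
elim: p u => [|e p IHp] u /=; first by move=> ->.
move=> uB /andP[/eqP src_e chain_p] last_p.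
have [dstB | dstNB] := boolP (dst e \in B).
  by rewrite (IHp (dst e)) ?orbT.
by rewrite inE src_e uB dstNB.
Qed.

Lemma out_edges_cut (s t : V) (B : {set V}) :
  s \in B -> t \notin B -> is_st_cut src dst s t (out_edges B).
Proof.
move=> sB tNB p /and3P[chain_p /eqP last_p _].
by apply: chain_has_out_edge sB chain_p _; rewrite last_p.
Qed.

Lemma find_out_edges_mono (A B : {set V}) u p :
  A \subset B -> u \in A -> chain src dst u p ->
  find (mem (out_edges A)) p <= find (mem (out_edges B)) p.
Proof.
move=> sAB; elim: p u => [|e p IHp] u //= uA /andP[/eqP src_e chain_p].
rewrite !inE src_e uA (subsetP sAB u uA) /=.
have [dstA | //] := boolP (dst e \in A).
by rewrite (subsetP sAB _ dstA) /=; apply: IHp dstA chain_p.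
Qed.

Lemma cut_le_out_edges (s t : V) (A B : {set V}) :
  A \subset B -> s \in A -> t \notin A ->
  cut_le src dst s t (out_edges A) (out_edges B).
Proof.
move=> sAB sA tNA p st_p; split; first exact: out_edges_cut st_p.
by case/and3P: st_p => chain_p _ _; apply: find_out_edges_mono chain_p.
Qed.

End OutEdges.

Section Residual.
Variables (V E : finType) (src dst : E -> V) (s : V).

Definition residual_edge (X : {set E}) : rel V :=
  fun u v => [exists e, [&& e \notin X, src e == u & dst e == v]].

Definition reach (X : {set E}) : {set V} :=
  [set v | connect (residual_edge X) s v].

Lemma source_in_reach X : s \in reach X.
Proof. by rewrite inE connect0. Qed.

Lemma out_edges_reach X : out_edges src dst (reach X) \subset X.
Proof.
apply/subsetP => e; rewrite !inE => /andP[reach_src]; apply: contraNT => eNX.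
apply: connect_trans reach_src (connect1 _).
by apply/existsP; exists e; rewrite eNX !eqxx.
Qed.

Lemma residual_path_chain X u vs : path (residual_edge X) u vs ->
  exists2 p : seq E, chain src dst u p /\ map dst p = vs &
                     all (fun e => e \notin X) p.
Proof.
elim: vs u => [|v vs IHvs] u /=; first by exists [::].
case/andP=> /existsP[e /and3P[eNX /eqP src_e /eqP dst_e]] /IHvs[p [chain_p dst_p] pNX].
by exists (e :: p); rewrite /= ?src_e ?dst_e ?eqxx ?chain_p ?dst_p ?eNX.
Qed.

Lemma sink_notin_reach t X : is_st_cut src dst s t X -> t \notin reach X.
Proof.
move=> cutX; rewrite inE; apply/negP => /connectP[vs path_vs last_vs].
case/shortenP: path_vs last_vs => ws path_ws uniq_ws _ last_ws.
have [p [chain_p dst_p] pNX] := residual_path_chain path_ws.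
have /cutX/hasP[e pe eX] : is_st_path src dst s t p.
  by rewrite /is_st_path /walk_vertices chain_p dst_p -last_ws eqxx uniq_ws.
by move/allP: pNX => /(_ e pe); rewrite eX.
Qed.

End Residual.

Lemma leq_sum_eq (I : finType) (f g : I -> nat) :
  (forall i, f i <= g i) -> \sum_i g i <= \sum_i f i -> f =1 g.
Proof.
move=> le_fg le_gf i; apply/eqP.
have [le_fg_sum /esym] := leqif_sum (fun i (_ : predT i) => leqif_eq (le_fg i)).
by rewrite eqn_leq le_fg_sum le_gf => /forallP/(_ i).
Qed.

Lemma sum_mult_card (E : finType) k (F : 'I_k -> {set E}) :
  \sum_e mult F e = \sum_i #|F i|.
Proof.
under eq_bigr => e _ do rewrite /mult -sum1dep_card big_mkcond.
rewrite exchange_big; apply: eq_bigr => i _.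
by rewrite -sum1_card [RHS]big_mkcond.
Qed.

Lemma card_ord_window k a b :
  #|[set j : 'I_k | a < k - j <= b]| <= b - a.
Proof.
set J := [set j | _]; rewrite cardE -(size_map (fun j : 'I_k => k - j)).
rewrite -(size_iota a.+1 (b - a)); apply: uniq_leq_size.
  rewrite map_inj_in_uniq ?enum_uniq // => i j _ _ /= eq_ij.
  by apply/val_inj => /=; have := ltn_ord i; have := ltn_ord j; lia.
move=> n /mapP[j]; rewrite mem_enum inE mem_iota => /andP[? ?] ->; lia.
Qed.

Section Uncrossing.
Variables (V E : finType) (src dst : E -> V) (s t : V) (k : nat).
Variable C : 'I_k -> {set E}.
Hypothesis C_min : in_Uk src dst s t C.

Definition reach_count (v : V) : nat :=
  #|[set i | v \in reach src dst s (C i)]|.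

Definition level (j : 'I_k) : {set V} := [set v | k - j <= reach_count v].

Definition uncrossed (j : 'I_k) : {set E} := out_edges src dst (level j).

Lemma reach_count_source : reach_count s = k.
Proof.
rewrite /reach_count -[RHS]card_ord; apply: eq_card => i.
by rewrite inE source_in_reach.
Qed.

Lemma reach_count_sink : reach_count t = 0.
Proof.
apply/eqP; rewrite cards_eq0; apply/set0Pn => -[i]; rewrite inE.
exact/negP/sink_notin_reach/(proj1 (C_min i)).
Qed.

Lemma source_in_level j : s \in level j.
Proof. by rewrite inE reach_count_source leq_subr. Qed.

Lemma sink_notin_level j : t \notin level j.
Proof. by rewrite inE reach_count_sink -ltnNge subn_gt0. Qed.

Lemma level_mono (i j : 'I_k) : i <= j -> level i \subset level j.
Proof.
by move=> le_ij; apply/subsetP => v; rewrite !inE; apply/leq_trans/leq_sub2l.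
Qed.

Lemma uncrossed_cut j : is_st_cut src dst s t (uncrossed j).
Proof. exact: out_edges_cut (source_in_level j) (sink_notin_level j). Qed.

Lemma mult_uncrossed_le e : mult uncrossed e <= mult C e.
Proof.
set u := src e; set v := dst e.
pose A i := reach src dst s (C i).
pose crossing := [set i | (u \in A i) && (v \notin A i)].
have window : mult uncrossed e <= reach_count u - reach_count v.
  rewrite /mult (_ : [set j | _] =
    [set j : 'I_k | reach_count v < k - j <= reach_count u]).
    exact: card_ord_window.
  by apply/setP => j; rewrite !inE ltnNge andbC.
have split_count : reach_count u <= #|crossing| + reach_count v.
  apply: leq_trans (leq_card_setU crossing [set i | v \in A i]).
  by apply/subset_leq_card/subsetP => i; rewrite !inE => ->; case: connect.
have crossing_sub : #|crossing| <= mult C e.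
  apply/subset_leq_card/subsetP => i; rewrite !inE => cross_i.
  by apply: (subsetP (out_edges_reach src dst s (C i))); rewrite !inE.
lia.
Qed.

Lemma card_le_uncrossed j : #|C j| <= #|uncrossed j|.
Proof. exact: (proj2 (C_min j)) (uncrossed_cut j). Qed.

Lemma mult_uncrossed e : mult C e = mult uncrossed e.
Proof.
apply/esym/(leq_sum_eq mult_uncrossed_le).
by rewrite !sum_mult_card; apply: leq_sum => j _; apply: card_le_uncrossed.
Qed.

Lemma card_uncrossed j : #|uncrossed j| = #|C j|.
Proof.
apply/esym/(leq_sum_eq card_le_uncrossed).
by rewrite -!sum_mult_card; apply: leq_sum => e _; rewrite mult_uncrossed.
Qed.

Lemma uncrossed_lr : in_Uk_lr src dst s t uncrossed.
Proof.
split=> [j | i j lt_ij].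
  split=> [|Y cutY]; first exact: uncrossed_cut.
  by rewrite card_uncrossed; apply: (proj2 (C_min j)).
apply: cut_le_out_edges (source_in_level i) (sink_notin_level i).
exact/level_mono/ltnW.
Qed.

End Uncrossing.

Theorem proposition1 (V E : finType) (src dst : E -> V) (s t : V) (k : nat)
  (hk : 0 < k) (C : 'I_k -> {set E}) :
  in_Uk src dst s t C ->
  exists Chat : 'I_k -> {set E},
    in_Uk_lr src dst s t Chat /\ forall e : E, mult C e = mult Chat e.
Proof.
move=> C_min; exists (uncrossed src dst s C).
by split; [apply: uncrossed_lr | apply: mult_uncrossed].
Qed.
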